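(* Let $d\ge1$ and let $X_1,\dots,X_n$ be random variables in the class $\mathcal{S}(d)$. There is a constant $C(d)$ depending only on $d$ such that for every real sequence $(a_i)$ and all $p,u\ge1$, $$\|(a_i)\|_{X,up}\le C(d)\,u^d\,\|(a_i)\|_{X,p}.$$
   Context: $X\in\mathcal{S}(d)$ means $X$ symmetric, $\|X\|_2=1/e$, $\|X\|_{2p}\le2^d\|X\|_p$ for all $p\ge1$, with $\|Z\|_p=(\mathbb{E}|Z|^p)^{1/p}$. $N^X_i(t)=-\ln\mathbb{P}(|X_i|\ge|t|)$; $\hat N^X_i(t)=t^2$ for $|t|\le1$ and $=N^X_i(t)$ for $|t|>1$. $\|(a_i)\|_{X,q}=\sup\{\sum_ia_ix_i:\sum_i\hat N^X_i(x_i)\le q\}$. *)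

From HB Require Import structures.
From mathcomp Require Import all_boot all_order all_algebra.
From mathcomp Require Import all_classical all_reals all_analysis.
Set Implicit Arguments. Unset Strict Implicit. Unset Printing Implicit Defensive.
Import Order.TTheory GRing.Theory Num.Theory.
Local Open Scope classical_set_scope.
Local Open Scope ring_scope.

Section Defs.
Context {R : realType} {d0 : measure_display} {T : measurableType d0}
  (P : probability T R).

Definition symmetricRV (X : {RV P >-> R}) : Prop :=
  forall B : set R, measurable B ->
    P (X @^-1` B) = P ((fun w => - X w) @^-1` B).

Definition pnorm (p : R) (X : {RV P >-> R}) : \bar R :=
  Lnorm P p%:E (EFin \o X).

Definition classS (d : R) (X : {RV P >-> R}) : Prop :=
  [/\ symmetricRV X,
      pnorm 2 X = ((expR 1)^-1)%:E
    & forall p : R, 1 <= p -> (pnorm (2 * p) X <= (2 `^ d)%:E * pnorm p X)%E].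

Definition tailP (X : {RV P >-> R}) (t : R) : \bar R :=
  P [set w | `|t| <= `|X w|].

Definition NX (X : {RV P >-> R}) (t : R) : \bar R :=
  if tailP X t == 0%E then +oo%E else (- ln (fine (tailP X t)))%:E.

Definition NhatX (X : {RV P >-> R}) (t : R) : \bar R :=
  if `|t| <= 1 then (t ^+ 2)%:E else NX X t.

Definition normX (n : nat) (X : 'I_n -> {RV P >-> R}) (a : 'I_n -> R) (q : R)
  : \bar R :=
  ereal_sup [set (\sum_(i < n) a i * x i)%:E |
               x in [set x : 'I_n -> R |
                       (\sum_(i < n) NhatX (X i) (x i) <= q%:E)%E]].
End Defs.

From HB Require Import structures.
From mathcomp Require Import all_boot all_order all_algebra.
From mathcomp Require Import all_classical all_reals all_analysis.
From mathcomp Require Import measurable_realfun ring lra.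
Import Order.TTheory GRing.Theory Num.Theory.
Local Open Scope classical_set_scope.
Local Open Scope ring_scope.

(* Write M_k for the norm of X in L^(2^(k+1)).  Membership in S(d) gives M_0 = 1/e and
   M_(k+1) <= 2^d M_k.  Markov's inequality turns M_k <= |t|/e into N(t) >= 2^(k+1), and
   the Paley-Zygmund inequality turns |s| <= M_k/2 into N(s) <= 2^(k+1) (1 + 2d).  Playing
   these two bounds against each other along the dyadic scale yields
   u \hat N(s) <= \hat N(C u^d s) for all s, so dividing a maximiser of the sup defining
   ||a||_(X,up) by C u^d produces a competitor for ||a||_(X,p). *)

Lemma ex_dyadic_bracket {R : realType} (w : R) : 1 <= w ->
  exists k, 2 ^+ k <= w < 2 ^+ k.+1.
Proof.
move=> w1; exists (trunc_log 2 (Num.truncn w)); apply/andP; split.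
  apply: (@le_trans _ _ (Num.truncn w)%:R); last by rewrite truncn_le (le_trans ler01).
  by rewrite -natrX ler_nat trunc_logP// truncn_gt0.
apply: lt_le_trans (truncnS_gt w) _.
by rewrite -natrX ler_nat trunc_log_ltn.
Qed.

Lemma ex_pow2_gt {R : realType} (x : R) : exists k, x < 2 ^+ k.
Proof.
exists (Num.truncn x).+1; apply: lt_le_trans (truncnS_gt x) _.
by rewrite -natrX ler_nat ltnW// ltn_expl.
Qed.

Lemma ler_sqr_div_add {R : realFieldType} (z l : R) :
  0 < l -> z <= l^-1 * z ^+ 2 + l / 4.
Proof.
move=> l0; rewrite -subr_ge0.
have -> : l^-1 * z ^+ 2 + l / 4 - z = (z - l / 2) ^+ 2 / l by field; rewrite gt_eqF.
by rewrite divr_ge0 ?sqr_ge0 ?ltW.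
Qed.

Lemma powR_half_le {R : realType} (m q : R) : 0 <= m -> 2 <= q ->
  (m / 2) `^ q <= m `^ q / 4.
Proof.
move=> m0 q2; rewrite powRM ?invr_ge0 ?ler0n// ler_wpM2l ?powR_ge0//.
apply: (@le_trans _ _ (2^-1 `^ 2)).
  by apply: ger_powR => //; rewrite invr_gt0 ltr0Sn /= invf_le1 ?ler1n.
by rewrite (powR_mulrn 2 (_ : 0 <= 2^-1)) ?invr_ge0 ?ler0n// exprVn -natrX.
Qed.

Lemma sqr_le_of_forall_amgm {R : realFieldType} (a b p : R) : 0 < a -> p <= 1 ->
  (forall l, 0 < l -> a <= a / 4 + b / l + l / 4 * p) -> a ^+ 2 <= 2 * b * p.
Proof.
move=> a0 p1 h.
have b0 : 0 < b.
  have ap : a / 4 * p <= a / 4 by rewrite ger_pMr ?divr_gt0.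
  have : 0 < b / a by have := h a a0; lra.
  by rewrite pmulr_lgt0 ?invr_gt0.
have := h (4 * b / a) (divr_gt0 (mulr_gt0 (ltr0Sn _ _) b0) a0).
have -> : b / (4 * b / a) = a / 4 by field; rewrite !gt_eqF.
have -> : 4 * b / a / 4 * p = b * p / a by field; rewrite gt_eqF.
rewrite -subr_ge0 => h1; rewrite -subr_ge0.
have -> : 2 * b * p - a ^+ 2 = 2 * a * (a / 4 + a / 4 + b * p / a - a).
  by field; rewrite gt_eqF.
by rewrite mulr_ge0// mulr_ge0// ltW.
Qed.

Lemma ler_mulr_sqr_root {R : realType} (d u c s : R) : 1 <= d -> 0 <= u ->
  u `^ d <= c -> 0 < `|s| <= 1 -> u * s ^+ 2 <= (c * `|s|) `^ d^-1.
Proof.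
move=> d1 u0 uc /andP[s_gt0 s1]; have d_gt0 : 0 < d by rewrite (lt_le_trans _ d1).
rewrite powRM ?(le_trans (powR_ge0 _ _) uc)//; apply: ler_pM; rewrite ?sqr_ge0//.
  have -> : u = (u `^ d) `^ d^-1 by rewrite -powRrM mulfV ?gt_eqF// powRr1.
  rewrite ge0_ler_powR ?nnegrE ?powR_ge0 ?invr_ge0 ?(ltW d_gt0)//.
  exact: le_trans (powR_ge0 _ _) uc.
rewrite -real_normK ?num_real// expr2 (le_trans (ler_piMr _ s1))//.
by rewrite ger1_powR ?s_gt0// invf_le1.
Qed.

Section tail_bounds.
Context {R : realType} {d0 : measure_display} {T : measurableType d0}.
Context {P : probability T R}.
Implicit Types (X : {RV P >-> R}) (q r t : R).
Local Open Scope ereal_scope.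

Lemma measurable_tail X r : measurable [set w | (r <= `|X w|)%R].
Proof.
have /(_ measurableT _ (measurable_itv `[r, +oo[)) :
    measurable_fun setT (fun w => `|X w|)%R by exact: measurableT_comp.
rewrite setTI; congr measurable; apply/seteqP; split => w /=; by rewrite in_itv/= andbT.
Qed.

Lemma tailP_ge0 X t : 0 <= tailP X t.
Proof. exact: measure_ge0. Qed.

Lemma tailP_le1 X t : tailP X t <= 1.
Proof. exact/probability_le1/measurable_tail. Qed.

Lemma tailP_fineK X t : tailP X t = (fine (tailP X t))%:E.
Proof.
by rewrite fineK// ge0_fin_numE ?tailP_ge0// (le_lt_trans (tailP_le1 _ _) (ltry _)).
Qed.

Lemma tailP_le X s t : (`|s| <= `|t|)%R -> tailP X t <= tailP X s.
Proof.
move=> st; apply: le_measure; rewrite ?inE; try exact: measurable_tail.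
by move=> w /=; apply: le_trans.
Qed.

Lemma NX_ge_of_tailP X (m : R) t : tailP X t <= (expR (- m))%:E -> m%:E <= NX X t.
Proof.
rewrite /NX tailP_fineK lee_fin => tPm; case: ifPn => [_|]; first exact: leey.
rewrite eqe => tP0; have tP_gt0 : (0 < fine (tailP X t))%R.
  by rewrite lt_neqAle eq_sym tP0 -lee_fin -tailP_fineK tailP_ge0.
by rewrite lee_fin lerNr -[X in (_ <= X)%R]expRK ler_ln// posrE expR_gt0.
Qed.

Lemma NX_le_of_tailP X (r : R) t : (0 < r)%R -> r%:E <= tailP X t ->
  NX X t <= (- ln r)%:E.
Proof.
rewrite /NX tailP_fineK lee_fin => r0 rtP.
rewrite ifF; last by apply/negbTE; rewrite eqe gt_eqF// (lt_le_trans r0).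
by rewrite lee_fin lerN2 ler_ln// posrE (lt_le_trans r0).
Qed.

Lemma NhatX_ge0 X t : 0 <= NhatX X t.
Proof.
rewrite /NhatX; case: ifP => _; first by rewrite lee_fin sqr_ge0.
rewrite /NX; case: ifP => _; first exact: leey.
rewrite lee_fin oppr_ge0 ln_le0// -lee_fin -tailP_fineK; exact: tailP_le1.
Qed.

Lemma pnorm_ge0 X q : 0 <= pnorm q X.
Proof. by rewrite /pnorm unlock poweR_ge0. Qed.

Let measurable_pow_norm X q : measurable_fun setT (fun w => `|X w| `^ q)%R.
Proof. by apply: (measurableT_comp (measurable_powR _)); apply: measurableT_comp. Qed.

Lemma integral_powR_pnorm X q (M : R) : (0 < q)%R -> pnorm q X = M%:E ->
  \int[P]_w (`|X w| `^ q)%:E = (M `^ q)%:E.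
Proof.
rewrite /pnorm unlock /= => q0.
have : 0 <= \int[P]_w (`|X w| `^ q)%:E.
  by apply: integral_ge0 => w _; rewrite lee_fin powR_ge0.
case: (\int[P]_w _) => [I| |] //= I0; last by rewrite invr_eq0 gt_eqF.
by case=> <-; rewrite -powRrM mulVf ?gt_eqF// powRr1.
Qed.

Lemma tailP_markov X q (M : R) t : (0 < q)%R -> pnorm q X = M%:E -> t != 0%R ->
  tailP X t <= ((M / `|t|) `^ q)%:E.
Proof.
move=> q0 hM t0; have t_gt0 : (0 < `|t|)%R by rewrite normr_gt0.
have := @markov _ _ _ P X (fun x => x `^ q)%R `|t| t_gt0 (measurable_powR _)
  (fun x _ => powR_ge0 _ _) (fun x y hx hy => ge0_ler_powR (ltW q0) hx hy).
rewrite unlock /= (integral_powR_pnorm _ _ _ q0 hM).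
have -> : [set w | `|t|%:E <= `|(X w)%:E|] = [set w | (`|t| <= `|X w|)%R].
  by apply/seteqP; split => w /=; rewrite lee_fin.
have M0 : (0 <= M)%R by rewrite -lee_fin -hM pnorm_ge0.
have -> : (M `^ q = (M / `|t|) `^ q * `|t| `^ q)%R.
  by rewrite -powRM ?divr_ge0// divfK// gt_eqF.
by rewrite -/(tailP X t) EFinM muleC lee_pmul2r// lte_fin powR_gt0.
Qed.

Lemma integral_le_affine {Z W : T -> R} {A : set T} {c al be : R} :
  measurable A -> measurable_fun setT Z -> measurable_fun setT W ->
  (forall w, 0 <= Z w)%R -> (forall w, 0 <= W w)%R ->
  (0 <= c)%R -> (0 <= al)%R -> (0 <= be)%R ->
  (forall w, Z w <= c + al * W w + be * \1_A w)%R ->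
  \int[P]_w (Z w)%:E <= c%:E + al%:E * \int[P]_w (W w)%:E + be%:E * P A.
Proof.
move=> mA mZ mW Z0 W0 c0 al0 be0 hZ.
have mI : measurable_fun setT (\1_A : T -> R) by exact: measurable_indic.
apply: (@le_trans _ _ (\int[P]_w (c + (al * W w + be * \1_A w))%:E)).
  apply: ge0_le_integral => //.
  - by move=> w _; rewrite lee_fin.
  - exact/measurable_EFinP.
  - apply/measurable_EFinP; apply: measurable_funD => //.
    by apply: measurable_funD; apply: measurable_funM.
  - by move=> w _; rewrite lee_fin addrA.
under eq_integral do rewrite EFinD EFinD !EFinM.
have WE0 w : 0 <= (W w)%:E by rewrite lee_fin.
have IE0 w : 0 <= (\1_A w : R)%:E by rewrite lee_fin.
have mWE : measurable_fun setT (fun w => (W w)%:E) by exact/measurable_EFinP.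
have mIE : measurable_fun setT (fun w => (\1_A w : R)%:E) by exact/measurable_EFinP.
rewrite ge0_integralD//; first rewrite ge0_integralD//.
- rewrite integral_cst// [X in c%:E * X](_ : _ = 1); last exact: probability_setT.
  rewrite mule1 !ge0_integralZl//.
  by rewrite integral_indic// setIT addeA.
all: try by move=> w _; rewrite ?adde_ge0 ?mule_ge0.
all: try by apply: emeasurable_funD; exact: emeasurable_funM.
all: exact: emeasurable_funM.
Qed.

Lemma tailP_paley_zygmund X q (M1 M2 : R) : (2 <= q)%R -> pnorm q X = M1%:E ->
  pnorm (2 * q) X = M2%:E -> (0 < M1)%R ->
  ((M1 `^ q) ^+ 2)%:E <= (2 * M2 `^ (2 * q))%:E * tailP X (M1 / 2).
Proof.
move=> q2 hM1 hM2 M1_gt0; have q0 : (0 < q)%R by rewrite (lt_le_trans _ q2).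
set a := (M1 `^ q)%R; set b := (M2 `^ (2 * q))%R.
set A := [set w | (`|M1 / 2| <= `|X w|)%R].
have a_gt0 : (0 < a)%R by rewrite powR_gt0.
have sqr_powR w : (`|X w| `^ (2 * q) = (`|X w| `^ q) ^+ 2)%R.
  by rewrite mulrC powRrM powR_mulrn ?powR_ge0.
have pointwise l w : (0 < l)%R ->
    (`|X w| `^ q <= a / 4 + l^-1 * `|X w| `^ (2 * q) + l / 4 * \1_A w)%R.
  move=> l0; rewrite sqr_powR indicE; have [Aw|Aw] := boolP (w \in A).
    by rewrite mulr1 -addrA ler_wpDl ?ler_sqr_div_add// divr_ge0// ltW.
  have M1h : (0 <= M1 / 2)%R by rewrite divr_ge0 ?ltW.
  have /ltW Xw : (`|X w| < M1 / 2)%R.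
    by rewrite ltNge -(ger0_norm M1h); apply: contraNN Aw; rewrite inE.
  rewrite mulr0 addr0 ler_wpDr ?mulr_ge0 ?invr_ge0 ?sqr_ge0 ?(ltW l0)//.
  have := powR_half_le _ _ (ltW M1_gt0) q2; rewrite -/a; apply: le_trans.
  by apply: ge0_ler_powR; rewrite ?nnegrE ?(ltW q0).
have amgm l : (0 < l)%R -> (a <= a / 4 + b / l + l / 4 * fine (P A))%R.
  move=> l0; have l4_ge0 : (0 <= l / 4)%R by rewrite divr_ge0 ?ltW.
  have linv_ge0 : (0 <= l^-1)%R by rewrite invr_ge0 ltW.
  have a4_ge0 : (0 <= a / 4)%R by rewrite divr_ge0 ?ltW.
  have := integral_le_affine (measurable_tail X _) (measurable_pow_norm X q)
    (measurable_pow_norm X (2 * q)%R) (fun w => powR_ge0 _ _) (fun w => powR_ge0 _ _)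
    a4_ge0 linv_ge0 l4_ge0 (pointwise l ^~ l0).
  rewrite (integral_powR_pnorm _ _ _ q0 hM1) (integral_powR_pnorm _ _ _ _ hM2) ?mulr_gt0//.
  by rewrite -/(tailP X _) {1}tailP_fineK -!EFinM -!EFinD lee_fin [(b / l)%R]mulrC.
rewrite tailP_fineK -EFinM lee_fin sqr_le_of_forall_amgm//.
by rewrite -lee_fin -tailP_fineK tailP_le1.
Qed.
End tail_bounds.

(* With K = 1 + 2d the constant of NX_le_dnorm, the factor (4 K u)^d absorbs the moment
   growth over the j + 2 dyadic steps with 2^j <= u K, and the factor 2e turns
   2|s| > M_k into |C u^d s| / e > M_(k+j+2) (see NX_scale_index). *)
Definition scale_const {R : realType} (d : R) := 2 * expR 1 * (4 * (1 + 2 * d)) `^ d.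

Lemma scale_const_ge {R : realType} (d : R) : 1 <= d -> 2 * expR 1 <= scale_const d.
Proof.
move=> d1; rewrite /scale_const ler_peMr ?mulr_ge0 ?expR_ge0//.
have K4 : 1 <= 4 * (1 + 2 * d) by rewrite mulr_ege1 ?ler1n// lerDl mulr_ge0 ?(le_trans _ d1).
exact: le_trans K4 (le1r_powR K4 d1).
Qed.

Section class_S.
Context {R : realType} {d0 : measure_display} {T : measurableType d0}.
Context {P : probability T R}.
Variables (d : R) (X : {RV P >-> R}).
Hypotheses (hd : 1 <= d) (hX : classS d X).

Definition dnorm k := fine (pnorm (2 ^+ k.+1) X).

Lemma pnorm_dnorm k : pnorm (2 ^+ k.+1) X = (dnorm k)%:E.
Proof.
have [_ pnorm2 pnorm_double] := hX.
elim: k => [|k IHk]; first by rewrite /dnorm expr1 pnorm2.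
have := pnorm_double _ (exprn_ege1 k.+1 (ler1n R 2)).
rewrite -exprS IHk -EFinM => le_pn.
by rewrite /dnorm fineK// ge0_fin_numE ?pnorm_ge0// (le_lt_trans le_pn (ltry _)).
Qed.

Lemma dnorm_ge0 k : 0 <= dnorm k.
Proof. by rewrite -lee_fin -pnorm_dnorm pnorm_ge0. Qed.

Lemma dnorm0 : dnorm 0 = (expR 1)^-1.
Proof. by have [_ pnorm2 _] := hX; rewrite /dnorm expr1 pnorm2. Qed.

Lemma dnormS k : dnorm k.+1 <= 2 `^ d * dnorm k.
Proof.
have [_ _ pnorm_double] := hX.
have := pnorm_double _ (exprn_ege1 k.+1 (ler1n R 2)).
by rewrite -exprS !pnorm_dnorm -EFinM lee_fin.
Qed.

Lemma dnormD k j : dnorm (k + j) <= (2 ^+ j) `^ d * dnorm k.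
Proof.
elim: j => [|j IHj]; first by rewrite addn0 expr0 powR1 mul1r.
rewrite addnS (le_trans (dnormS _))// exprS powRM ?exprn_ge0// -mulrA.
by rewrite ler_wpM2l ?powR_ge0.
Qed.

Lemma NX_ge_dnorm k t : t != 0 -> dnorm k <= `|t| / expR 1 ->
  ((2 ^+ k.+1)%:E <= NX X t)%E.
Proof.
move=> t0 le_dt; apply: NX_ge_of_tailP.
have q0 : 0 < 2 ^+ k.+1 :> R by rewrite exprn_gt0.
apply: (le_trans (tailP_markov X _ _ _ q0 (pnorm_dnorm k) t0)).
rewrite lee_fin -mulN1r expRM expRN.
rewrite ge0_ler_powR ?nnegrE ?exprn_ge0 ?divr_ge0 ?dnorm_ge0//.
by rewrite ler_pdivrMr ?normr_gt0// mulrC.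
Qed.

Lemma tailP_half_dnorm k : 0 < dnorm k ->
  ((2 `^ (1 + d * 2 ^+ k.+2))^-1%:E <= tailP X (dnorm k / 2))%E.
Proof.
move=> dk_gt0; set q : R := 2 ^+ k.+1.
have q2 : 2 <= q by rewrite /q exprS ler_peMr ?exprn_ege1 ?ler1n.
have pnorm2q : pnorm (2 * q) X = (dnorm k.+1)%:E by rewrite -exprS pnorm_dnorm.
have := tailP_paley_zygmund X _ _ _ q2 (pnorm_dnorm k) pnorm2q dk_gt0.
set a := dnorm k `^ q; have a_gt0 : 0 < a by rewrite powR_gt0.
have le_b : dnorm k.+1 `^ (2 * q) <= 2 `^ (d * (2 * q)) * a ^+ 2.
  have -> : 2 `^ (d * (2 * q)) * a ^+ 2 = (2 `^ d * dnorm k) `^ (2 * q).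
    rewrite powRM ?powR_ge0 ?dnorm_ge0// -powRrM /a -powR_mulrn ?powR_ge0//.
    by rewrite -powRrM [q * _]mulrC.
  apply: ge0_ler_powR; rewrite ?nnegrE ?mulr_ge0 ?exprn_ge0 ?powR_ge0 ?dnorm_ge0//.
  exact: dnormS.
set p := fine (tailP X (dnorm k / 2)).
have p_ge0 : 0 <= p by rewrite -lee_fin -tailP_fineK tailP_ge0.
rewrite [tailP _ _]tailP_fineK -EFinM !lee_fin -/p => le_a.
rewrite -[_^-1]mulr1 ler_pdivrMl ?powR_gt0//.
rewrite powRD ?pnatr_eq0 ?implybT ?powRr1// exprS -/q.
have le_bp := ler_wpM2r p_ge0 le_b.
rewrite -(ler_pM2l (exprn_gt0 2 a_gt0)) mulr1; lra.
Qed.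

Lemma NX_le_dnorm k s : 0 < dnorm k -> `|s| <= dnorm k / 2 ->
  (NX X s <= (2 ^+ k.+1 * (1 + 2 * d))%:E)%E.
Proof.
move=> dk_gt0 le_s.
have le_tail := le_trans (tailP_half_dnorm k dk_gt0) (tailP_le X _ _ _).
apply: le_trans (NX_le_of_tailP _ _ _ _ (le_tail _ _)) _.
- by rewrite invr_gt0 powR_gt0.
- by rewrite [`|dnorm k / 2|]ger0_norm ?divr_ge0 ?(ltW dk_gt0).
have ln2_le1 : ln 2 <= 1 :> R.
  by rewrite -[X in _ <= X]expRK ler_ln ?posrE ?expR_gt0// (le_trans _ (expR_ge1Dx 1)).
rewrite lee_fin lnV ?posrE ?powR_gt0// opprK ln_powR exprS; set x : R := 2 ^+ k.+1.
have x1 : 1 <= x by rewrite exprn_ege1 ?ler1n.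
have e_ge0 : 0 <= 1 + d * (2 * x).
  by rewrite addr_ge0 ?mulr_ge0 ?(le_trans _ hd) ?(le_trans _ x1).
by have := ler_wpM2l e_ge0 ln2_le1; rewrite mulr1; lra.
Qed.

Lemma NX_ge_root t : 1 <= `|t| -> ((`|t| `^ d^-1)%:E <= NX X t)%E.
Proof.
move=> t1; have d_gt0 : 0 < d by rewrite (lt_le_trans _ hd).
have w1 : 1 <= `|t| `^ d^-1.
  have := @ge0_ler_powR _ d^-1 _ 1 `|t|; rewrite powR1; apply; rewrite ?nnegrE//.
  by rewrite invr_ge0 ltW.
have [k /andP[lo hi]] := ex_dyadic_bracket _ w1.
have t0 : t != 0 by rewrite -normr_gt0 (lt_le_trans ltr01).
have le_dk : dnorm k <= `|t| / expR 1.
  apply: le_trans (dnormD 0 k) _; rewrite dnorm0 ler_wpM2r ?invr_ge0 ?expR_ge0//.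
  have -> : `|t| = (`|t| `^ d^-1) `^ d by rewrite -powRrM mulVf ?gt_eqF// powRr1.
  by rewrite ge0_ler_powR ?nnegrE ?exprn_ge0 ?powR_ge0 ?(ltW d_gt0).
by rewrite (le_trans _ (NX_ge_dnorm k t t0 le_dk))// lee_fin ltW.
Qed.

Lemma ex_dnorm_gt t : t != 0 -> NX X t != +oo%E -> exists k, `|t| / expR 1 < dnorm k.
Proof.
move=> t0 NX_fin; have NXE : NX X t = (fine (NX X t))%:E.
  by move: NX_fin; rewrite /NX; case: ifP; rewrite ?eqxx.
have [k ltNk] := ex_pow2_gt (fine (NX X t)); exists k.
rewrite ltNge; apply/negP => le_dk.
have := NX_ge_dnorm k t t0 le_dk; rewrite NXE lee_fin exprS.
have : 0 < 2 ^+ k :> R by rewrite exprn_gt0.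
lra.
Qed.

Variable u : R.
Hypothesis u1 : 1 <= u.
Let c := scale_const d * u `^ d.

Let c_ge : 2 * expR 1 * u `^ d <= c.
Proof. by rewrite ler_wpM2r ?powR_ge0 ?scale_const_ge. Qed.

Let c_gt0 : 0 < c.
Proof.
by rewrite (lt_le_trans _ c_ge) ?mulr_gt0 ?expR_gt0 ?powR_gt0 ?(lt_le_trans _ u1).
Qed.

Let c_ge0 : 0 <= c. Proof. exact: ltW. Qed.

(* Paley-Zygmund at index k + 1 gives N(s) <= 2^(k+2) K, while Markov at index k + j + 2,
   with 2^j <= u K < 2^(j+1), gives N(c s) >= 2^(k+j+3) >= u 2^(k+2) K. *)
Lemma NX_scale_index k s : dnorm k < 2 * `|s| <= dnorm k.+1 ->
  (u%:E * NX X s <= NX X (c * s))%E.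
Proof.
move=> /andP[lt_k le_k1]; set K := 1 + 2 * d.
have s_gt0 : 0 < `|s|.
  by rewrite -(pmulr_rgt0 _ (ltr0Sn _ 1)) (le_lt_trans (dnorm_ge0 k)).
have K1 : 1 <= K by rewrite lerDl mulr_ge0 ?(le_trans _ hd).
have le_NXs : (NX X s <= (2 ^+ k.+2 * K)%:E)%E.
  by apply: NX_le_dnorm; rewrite ?ler_pdivlMr; lra.
have [j /andP[lo hi]] := ex_dyadic_bracket (u * K) (mulr_ege1 u1 K1).
have le_dkj : dnorm (k + j.+2) <= `|c * s| / expR 1.
  apply: le_trans (dnormD k j.+2) _.
  have -> : `|c * s| / expR 1 = (4 * K * u) `^ d * (2 * `|s|).
    rewrite normrM (ger0_norm c_ge0) powRM ?mulr_ge0 ?(le_trans _ K1) ?(le_trans _ u1)//.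
    by rewrite /c /scale_const -/K; field; rewrite gt_eqF ?expR_gt0.
  apply: ler_pM; rewrite ?powR_ge0 ?dnorm_ge0 ?(ltW lt_k)//.
  rewrite ge0_ler_powR ?nnegrE ?exprn_ge0 ?mulr_ge0//;
    try by rewrite ?(le_trans _ hd) ?(le_trans _ K1) ?(le_trans _ u1).
  by rewrite -mulrA [K * u]mulrC !exprS mulrA -natrM ler_wpM2l.
have cs0 : c * s != 0 by rewrite mulf_neq0 ?(gt_eqF c_gt0) -?normr_gt0.
apply: le_trans (NX_ge_dnorm _ _ cs0 le_dkj); apply: le_trans (lee_wpmul2l _ le_NXs) _.
  by rewrite lee_fin (le_trans _ u1).
rewrite -EFinM lee_fin.
have -> : (k + j.+2).+1 = (k.+2 + j.+1)%N by rewrite !addnS !addSn.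
by rewrite exprD mulrCA ler_wpM2l ?exprn_ge0 ?(ltW hi).
Qed.

Lemma NX_scale_large s : 1 < `|s| -> (u%:E * NX X s <= NX X (c * s))%E.
Proof.
move=> s1; have [->|NX_fin] := eqVneq (NX X (c * s)) +oo%E; first exact: leey.
have cs0 : c * s != 0 by rewrite mulf_neq0 ?(gt_eqF c_gt0) -?normr_gt0 ?(lt_trans ltr01).
have [k lt_k] := ex_dnorm_gt (c * s) cs0 NX_fin.
have le_2s : 2 * `|s| <= `|c * s| / expR 1.
  rewrite normrM (ger0_norm c_ge0) ler_pdivlMr ?expR_gt0// mulrAC ler_wpM2r//.
  rewrite (le_trans _ c_ge)// ler_peMr ?mulr_ge0 ?expR_ge0//.
  exact: le_trans u1 (le1r_powR u1 hd).
have ex_k : exists k, 2 * `|s| <= dnorm k by exists k; rewrite ltW ?(le_lt_trans le_2s).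
have [[|k'] le_k' min_k'] := ex_minnP ex_k.
  have : (expR 1)^-1 <= 1 :> R by rewrite invf_le1 ?expR_gt0// -expR0 ler_expR.
  by move: le_k'; rewrite dnorm0 => ? ?; exfalso; lra.
apply: (NX_scale_index k'); apply/andP; split => //.
by rewrite ltNge; apply/negP => /min_k'; rewrite ltnn.
Qed.

Lemma NhatX_scale s : (u%:E * NhatX X s <= NhatX X (c * s))%E.
Proof.
have udc : u `^ d <= c.
  rewrite /c ler_peMl ?powR_ge0// (le_trans _ (scale_const_ge _ hd))//.
  by rewrite mulr_ege1 ?ler1n// -expR0 ler_expR.
have uc : u <= c := le_trans (le1r_powR u1 hd) udc.
have c1 : 1 <= c := le_trans u1 uc.
rewrite /NhatX; have [cs1|cs1] := leP `|c * s| 1.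
  rewrite ifT; last by rewrite (le_trans _ cs1)// normrM ger0_norm// ler_peMl.
  rewrite -EFinM lee_fin exprMn ler_wpM2r ?sqr_ge0// expr2 (le_trans uc)//.
  by rewrite ler_peMl// (le_trans ler01).
have [s1|s1] := leP `|s| 1; last exact: NX_scale_large.
rewrite -EFinM (le_trans _ (NX_ge_root _ (ltW cs1)))// lee_fin normrM ger0_norm//.
have s_gt0 : 0 < `|s|.
  by rewrite normr_gt0; apply: contraTneq cs1 => ->; rewrite mulr0 normr0 ltr10.
by apply: ler_mulr_sqr_root; rewrite ?s_gt0 ?(le_trans ler01 u1).
Qed.
End class_S.

Lemma normX_scale {R : realType} {d0 : measure_display} {T : measurableType d0}
    {P : probability T R} n (X : 'I_n -> {RV P >-> R}) a p u c : 0 < u -> 0 < c ->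
  (forall i s, u%:E * NhatX (X i) s <= NhatX (X i) (c * s))%E ->
  (normX X a (u * p) <= c%:E * normX X a p)%E.
Proof.
move=> u_gt0 c_gt0 scaleN; apply: ge_ereal_sup => _ [x Nx <-].
have NxV : (\sum_(i < n) NhatX (X i) (x i / c) <= p%:E)%E.
  rewrite -(lee_pmul2l (x := u%:E)) ?lte_fin// -EFinM ge0_sume_distrr; last first.
    by move=> i _; exact: NhatX_ge0.
  apply: le_trans Nx; apply: lee_sum => i _.
  by have := scaleN i (x i / c); rewrite [c * _]mulrC divfK ?gt_eqF.
have -> : \sum_(i < n) a i * x i = c * \sum_(i < n) a i * (x i / c).
  by rewrite mulr_sumr; apply: eq_bigr => i _; rewrite mulrCA [c * _]mulrC divfK ?gt_eqF.
rewrite EFinM lee_pmul2l ?lte_fin//.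
by apply: ereal_sup_ubound; exists (fun i => x i / c).
Qed.

Theorem lemma3p3 (R : realType) (d : R) (hd : 1 <= d) :
  exists C : R,
    forall (d0 : measure_display) (T : measurableType d0)
           (P : probability T R) (n : nat) (X : 'I_n -> {RV P >-> R}),
      (forall i, classS d (X i)) ->
      forall (a : 'I_n -> R) (p u : R), 1 <= p -> 1 <= u ->
        (normX X a (u * p) <= (C * u `^ d)%:E * normX X a p)%E.
Proof.
exists (scale_const d) => d0 T P n X hX a p u _ u1.
have u_gt0 : 0 < u := lt_le_trans ltr01 u1.
have C_gt0 : 0 < scale_const d.
  by rewrite (lt_le_trans _ (scale_const_ge _ hd)) ?mulr_gt0 ?expR_gt0.
apply: normX_scale => //; first by rewrite mulr_gt0 ?powR_gt0.
by move=> i s; apply: NhatX_scale.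
Qed.
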